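(* Let $G=(X\cup Y,E)$ be a connected convex bipartite graph with a lex-convex ordering $\sigma=(x_1,\ldots,x_{n_1},y_1,\ldots,y_{n_2})$, and let $(H_1,J_1,H_2,J_2,\ldots)$ be the chain decomposition of $G$ with respect to $\sigma$. Let $y_{r'}=right(x_1)$, $x_r=right(y_1)$, $y_s=right(x_r)$, and assume $s<n_2$; let $x_l=left(y_{s+1})$ and $x_p=right(y_{s+1})$. Then at least one of the following holds: (a) there exists a minimum vertex-edge dominating set $D$ of $G$ with $x_r\in D$; (b) there exists a minimum vertex-edge dominating set $D$ of $G$ with $y_\alpha\in D$, where $\alpha=\max\{i : 1\le i\le r' \text{ and } y_i \text{ is adjacent to every vertex of } J_1\}$ (in particular this set of indices is nonempty, and $y_\alpha\in N_G(x_1)$).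
   Context: All graphs are finite, simple and undirected. $N_G(v)$ is the open neighbourhood and $N_G[v]=N_G(v)\cup\{v\}$. An edge $uv$ is ve-dominated by a vertex $w$ if $w\in N_G[u]\cup N_G[v]$. A vertex-edge dominating set (VED-set) of $G$ is a set $D\subseteq V(G)$ such that every edge $uv$ satisfies $|(N_G[u]\cup N_G[v])\cap D|\ge 1$; $\gamma_{ve}(G)$ is the minimum size of a VED-set, and a minimum VED-set is one of that size. A bipartite graph $G=(X\cup Y,E)$ is convex (with respect to $Y$) if $Y$ can be ordered $y_1,\dots,y_{n_2}$ so that for every $x\in X$, $N_G(x)$ is a set of consecutive vertices in this order. Given an ordering $\sigma=(x_1,\dots,x_{n_1},y_1,\dots,y_{n_2})$, for a vertex $v$, $left(v)$ and $right(v)$ denote the neighbours of $v$ of minimum and maximum index in $\sigma$ respectively; for $x_i,x_j$, $left(x_i)\prec left(x_j)$ (resp. $\preceq$) means the index of $left(x_i)$ is less than (resp. at most) that of $left(x_j)$, and similarly for $right$. $\sigma$ is lex-convex if the order on $Y$ is a convex ordering and for all $i<j$ either $left(x_i)\prec left(x_j)$, or $left(x_i)=left(x_j)$ and $right(x_i)\preceq right(x_j)$. A bipartite graph is a chain graph if the neighbourhoods on each side are totally ordered by inclusion. The chain decomposition of a connected convex bipartite graph $G$ with lex-convex ordering $\sigma$: let $x_{t_1}=right(y_1)$ and let $H_1$ be the (chain) subgraph induced by $N(y_1)\cup N(x_{t_1})$; remove $H_1$ from $G$; let $J_1$ be the set of vertices of $X$ that are isolated in $G-V(H_1)$; remove $J_1$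 as well; repeat on the remaining graph (with the inherited ordering) to obtain $H_2,J_2,\dots$, until what remains is a chain graph or a set of isolated vertices. Isolated vertices are not considered part of any $H_i$. Notation: $X_i=\{x_i,\dots,x_{n_1}\}$, $Y_i=\{y_i,\dots,y_{n_2}\}$. *)

From mathcomp Require Import all_boot all_order.
Set Implicit Arguments. Unset Strict Implicit. Unset Printing Implicit Defensive.

(* A bipartite graph with sides X = 'I_n1.+1 (x_1,...,x_{n1+1}, 0-based) and
   Y = 'I_n2.+1 (y_1,...,y_{n2+1}, 0-based); the given orders on X and Y are
   the orders of the ordinals, i.e. sigma = (x_1..x_{|X|}, y_1..y_{|Y|}).
   adj x y <-> xy is an edge. *)

Section Bip.
Variables (n1 n2 : nat) (adj : 'I_n1.+1 -> 'I_n2.+1 -> bool).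

Definition vert := ('I_n1.+1 + 'I_n2.+1)%type.

Definition grel : rel vert := fun u v =>
  match u, v with
  | inl x, inr y => adj x y
  | inr y, inl x => adj x y
  | _, _ => false
  end.

Definition connected_bip : Prop := forall u v : vert, connect grel u v.

Definition cnbhd (v : vert) : {set vert} := [set w | (w == v) || grel v w].

Definition is_ved (D : {set vert}) : Prop :=
  forall u v : vert, grel u v -> exists2 w, w \in D & w \in cnbhd u :|: cnbhd v.

Definition is_min_ved (D : {set vert}) : Prop :=
  is_ved D /\ forall D' : {set vert}, is_ved D' -> #|D| <= #|D'|.

Definition convex_Y : Prop :=
  forall (x : 'I_n1.+1) (y1 y2 y : 'I_n2.+1),
    adj x y1 -> adj x y2 -> y1 <= y <= y2 -> adj x y.

(* left/right of vertices (as 0-based indices; meaningful when the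
   neighbourhood is nonempty, which holds in a connected graph) *)
Definition leftX (x : 'I_n1.+1) : nat := \big[minn/n2]_(y | adj x y) (y : nat).
Definition rightX (x : 'I_n1.+1) : nat := \max_(y | adj x y) (y : nat).
Definition rightY (y : 'I_n2.+1) : nat := \max_(x | adj x y) (x : nat).

Definition lex_convex : Prop :=
  convex_Y /\
  forall i j : 'I_n1.+1, i < j ->
    leftX i < leftX j \/ (leftX i = leftX j /\ rightX i <= rightX j).

(* first step of the chain decomposition:
   x_{t_1} = right(y_1);  V(H_1) = N(y_1) u N(x_{t_1});
   J_1 = vertices of X isolated in G - V(H_1),
       = { x in X \ N(y_1) | N(x) subset N(x_{t_1}) }. *)
Definition xt1 : 'I_n1.+1 := inord (rightY ord0).

Definition J1 : {set 'I_n1.+1} :=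
  [set x | ~~ adj x ord0 & [forall y, adj x y ==> adj xt1 y]].

End Bip.

From Pilot Require Import Defs.
From mathcomp Require Import all_boot all_order.
Set Implicit Arguments. Unset Strict Implicit. Unset Printing Implicit Defensive.

(* Start from any minimum VED-set D and a vertex w of D dominating the edge
   x_1 y_1.  Neighbours of y_1 have neighbourhoods contained in N(x_r), so if
   w lies in X it can be traded for x_r.  Otherwise w = y_j with y_j ~ x_1; if
   trading y_j for x_r fails, some edge c w' with c ~ y_j and w' beyond
   right(x_r) is dominated by y_j alone.  If D contains another vertex within
   distance 2 of x_r, the pair of it and y_j can be traded for x_r and the
   neighbour of y_j reaching furthest to the right.  Otherwise no vertex of D
   but y_j dominates the edges at J_1, so J_1 is contained in N(y_j), and y_j
   can be traded for y_alpha, whose neighbourhood contains that of y_j. *)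

Section VertexEdgeDomination.
Variables (n1 n2 : nat) (adj : 'I_n1.+1 -> 'I_n2.+1 -> bool).
Implicit Types (x : 'I_n1.+1) (y : 'I_n2.+1) (D A B : {set vert n1 n2}).

Definition ve_dominates (w : vert n1 n2) x y :=
  w \in cnbhd adj (inl x) :|: cnbhd adj (inr y).

Lemma ve_dominatesXE x' x y : ve_dominates (inl x') x y = (x' == x) || adj x' y.
Proof. by rewrite /ve_dominates !inE /= orbF. Qed.

Lemma ve_dominatesYE y' x y : ve_dominates (inr y') x y = adj x y' || (y' == y).
Proof. by rewrite /ve_dominates !inE /= orbF. Qed.

Lemma ve_dominatesY_edge y' x y : adj x y -> ve_dominates (inr y') x y = adj x y'.
Proof. by rewrite ve_dominatesYE => hxy; case: eqP => [->|]; rewrite ?hxy ?orbF. Qed.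

Lemma is_vedP D :
  is_ved adj D <-> forall x y, adj x y -> exists2 w, w \in D & ve_dominates w x y.
Proof.
split=> [hD x y hxy | hD [x|y] [x'|y'] //= h]; first exact: hD (inl x) (inr y) hxy.
  by have [w wD wd] := hD x y' h; exists w.
by have [w wD wd] := hD x' y h; exists w; rewrite // setUC.
Qed.

Definition vedb D :=
  [forall x, forall y, adj x y ==> [exists w in D, ve_dominates w x y]].

Lemma vedbP D : reflect (is_ved adj D) (vedb D).
Proof.
apply: (iffP forallP) => [h | /is_vedP h x].
  apply/is_vedP => x y hxy.
  by have /forallP/(_ y)/implyP/(_ hxy)/exists_inP := h x.
apply/forallP => y; apply/implyP => /h [w wD wd].
by apply/exists_inP; exists w.
Qed.

Lemma ved_or_undominated D :
  is_ved adj D \/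
  exists x y, adj x y /\ forall w, w \in D -> ~~ ve_dominates w x y.
Proof.
have [/vedbP | ] := boolP (vedb D); first by left.
case/forallPn => x /forallPn [y]; rewrite negb_imply => /andP [hxy /exists_inPn undom].
by right; exists x, y.
Qed.

Lemma min_ved_exists : exists D, is_min_ved adj D.
Proof.
have vedT : vedb setT.
  by apply/vedbP => u v _; exists u; rewrite !inE ?eqxx.
case: (arg_minnP (fun D => #|D|) vedT) => D /vedbP hD Dmin.
by exists D; split=> // D' /vedbP /Dmin.
Qed.

Lemma min_ved_le D D' :
  is_min_ved adj D -> is_ved adj D' -> #|D'| <= #|D| -> is_min_ved adj D'.
Proof. by move=> [_ Dmin] hD' le; split=> // D'' /Dmin; apply: leq_trans. Qed.

Lemma card_setDU (T : finType) (D A B : {set T}) :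
  A \subset D -> #|B| <= #|A| -> #|(D :\: A) :|: B| <= #|D|.
Proof.
move=> sAD leBA; rewrite -(cardsID A D) (setIidPr sAD).
by apply: leq_trans (leq_card_setU _ _) _; rewrite addnC leq_add2r.
Qed.

Lemma min_ved_exchange D A B :
  is_min_ved adj D -> A \subset D -> #|B| <= #|A| ->
  (forall x y w, adj x y -> w \in A -> ve_dominates w x y ->
     exists2 w', w' \in B & ve_dominates w' x y) ->
  is_min_ved adj ((D :\: A) :|: B).
Proof.
move=> Dmin sAD leBA AB; apply: (min_ved_le Dmin _ (card_setDU sAD leBA)).
apply/is_vedP => x y hxy; have [w wD wd] := (is_vedP D).1 Dmin.1 x y hxy.
case: (boolP (w \in A)) => wA; last by exists w; rewrite // !inE wA wD.
by have [w' w'B w'd] := AB x y w hxy wA wd; exists w'; rewrite // inE w'B orbT.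
Qed.

Lemma min_ved_swap1 D a b :
  is_min_ved adj D -> a \in D ->
  (forall x y, adj x y -> ve_dominates a x y -> ve_dominates b x y) ->
  is_min_ved adj (D :\ a :|: [set b]).
Proof.
move=> Dmin aD ab; apply: min_ved_exchange; rewrite ?sub1set ?cards1 //.
by move=> x y w hxy /set1P -> /(ab x y hxy); exists b; rewrite ?set11.
Qed.

End VertexEdgeDomination.

Section LexConvexOrder.
Variables (n1 n2 : nat) (adj : 'I_n1.+1 -> 'I_n2.+1 -> bool).
Hypotheses (conn : connected_bip adj) (lex : lex_convex adj).
Implicit Types (x : 'I_n1.+1) (y : 'I_n2.+1).

Lemma exists_grel (u t : vert n1 n2) : u != t -> exists v, Defs.grel adj u v.
Proof.
move=> ut; case/connectP: (conn u t) => [[_ /= tu | v p /= /andP [uv _] _]].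
  by rewrite tu eqxx in ut.
by exists v.
Qed.

Lemma exists_adjX x : exists y, adj x y.
Proof. by have [[//|y] h] := @exists_grel (inl x) (inr ord0) isT; exists y. Qed.

Lemma exists_adjY y : exists x, adj x y.
Proof. by have [[x|//] h] := @exists_grel (inr y) (inl ord0) isT; exists x. Qed.

Lemma adj_convex x y1 y2 y : adj x y1 -> adj x y2 -> y1 <= y <= y2 -> adj x y.
Proof. by case: lex => cvx _; apply: cvx. Qed.

Lemma leq_rightX x y : adj x y -> y <= rightX adj x.
Proof. exact: (leq_bigmax_cond (F := fun y : 'I_n2.+1 => (y : nat))). Qed.

Lemma rightX_attained x : exists2 y, adj x y & y = rightX adj x :> nat.
Proof.
have [y0 h0] := exists_adjX x.
case: (arg_maxnP (fun y : 'I_n2.+1 => (y : nat)) h0) => y hy ymax.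
exists y => //; apply/eqP; rewrite eqn_leq leq_rightX //=.
by apply/bigmax_leqP => i /ymax.
Qed.

Lemma leq_rightY x y : adj x y -> x <= rightY adj y.
Proof. exact: (leq_bigmax_cond (F := fun x : 'I_n1.+1 => (x : nat))). Qed.

Lemma rightY_attained y : exists2 x, adj x y & x = rightY adj y :> nat.
Proof.
have [x0 h0] := exists_adjY y.
case: (@arg_maxnP _ x0 (adj^~ y) (fun x : 'I_n1.+1 => (x : nat)) h0) => x hx xmax.
exists x => //; apply/eqP; rewrite eqn_leq leq_rightY //=.
by apply/bigmax_leqP => i /xmax.
Qed.

Lemma leftX_leq x y : adj x y -> leftX adj x <= y.
Proof.
rewrite /leftX => hy; have : y \in index_enum 'I_n2.+1 by rewrite mem_index_enum.
elim: (index_enum _) => // a r IH; rewrite inE big_cons => /orP [/eqP <- | yr].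
  by rewrite hy geq_minl.
by case: (adj x a); rewrite ?geq_min IH ?orbT.
Qed.

Lemma leftX_attained x : exists2 y, adj x y & y = leftX adj x :> nat.
Proof.
have [y1 h1] := exists_adjX x.
have : (leftX adj x == n2) || [exists y, adj x y && (val y == leftX adj x)].
  rewrite /leftX; elim/big_ind: _ => [|a b ha hb|y hy]; first by rewrite eqxx.
    by rewrite /minn; case: ifP.
  by apply/orP; right; apply/existsP; exists y; rewrite hy eqxx.
case/orP => [/eqP e | /existsP [y /andP [h /eqP e]]]; last by exists y.
exists y1 => //; apply/eqP; rewrite eqn_leq leftX_leq // andbT e -ltnS.
exact: ltn_ord.
Qed.

Lemma adj_between x y1 y : adj x y1 -> y1 <= y <= rightX adj x -> adj x y.
Proof.
move=> h1 /andP [le1y leyr]; have [y2 h2 e2] := rightX_attained x.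
by apply: (adj_convex h1 h2); rewrite le1y e2.
Qed.

Lemma exists_max_rightX_nbr x0 y :
  adj x0 y -> exists2 m, adj m y & forall x, adj x y -> rightX adj x <= rightX adj m.
Proof.
by move=> h; case: (@arg_maxnP _ x0 (adj^~ y) (rightX adj) h) => m hm mmax; exists m.
Qed.

Lemma adj00 : adj ord0 ord0.
Proof.
have [x hx] := exists_adjY ord0.
have lx0 : leftX adj x = 0 by apply/eqP; rewrite -leqn0; exact: leftX_leq hx.
have l00 : leftX adj ord0 = 0.
  have [x0 | xpos] := posnP x.
    by have <- : x = ord0 by apply: val_inj.
  by case: lex => _ /(_ ord0 x xpos) [|[-> _]] //; rewrite lx0 ltn0.
have [y hy ey] := leftX_attained ord0.
by have -> : (ord0 : 'I_n2.+1) = y by apply: val_inj; rewrite /= ey l00.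
Qed.

(* Among the neighbours of y_1, lex-convexity orders the vertices by their
   right ends, since they all share the left end y_1. *)
Lemma rightX_homo_adj0 x x' :
  adj x ord0 -> adj x' ord0 -> x <= x' -> rightX adj x <= rightX adj x'.
Proof.
move=> h h'; rewrite leq_eqVlt => /orP [/eqP e | lt].
  by have -> : x = x' by apply: val_inj.
case: lex => _ /(_ x x' lt) [|[_ //]].
by move: (leftX_leq h'); rewrite leqn0 => /eqP ->; rewrite ltn0.
Qed.

Local Notation xr := (xt1 adj).
Local Notation ve_dominates := (ve_dominates adj).

Lemma xt1_val : xr = rightY adj ord0 :> nat.
Proof.
by rewrite /xt1; have [x _ <-] := rightY_attained ord0; rewrite inordK //; apply: ltn_ord.
Qed.

Lemma xt1_adj0 : adj xr ord0.
Proof.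
have [x hx ex] := rightY_attained ord0.
by rewrite (_ : xr = x) //; apply: ord_inj; rewrite xt1_val ex.
Qed.

Lemma adj_xt1E y : adj xr y = (y <= rightX adj xr).
Proof.
apply/idP/idP; first exact: leq_rightX.
by move=> le; apply: (adj_between xt1_adj0).
Qed.

Lemma adj_xt1_lt y y' : adj xr y -> ~~ adj xr y' -> y < y'.
Proof.
move=> h; rewrite ltnNge; apply: contra => le.
by rewrite adj_xt1E (leq_trans le) // -adj_xt1E.
Qed.

Lemma adj_xt1_of_adj0 x y : adj x ord0 -> adj x y -> adj xr y.
Proof.
move=> h0 hy; rewrite adj_xt1E (leq_trans (leq_rightX hy)) //.
by apply: (rightX_homo_adj0 h0 xt1_adj0); rewrite xt1_val; apply: leq_rightY.
Qed.

Lemma rightX_ord0_le_xt1 : rightX adj ord0 <= rightX adj xr.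
Proof. exact: rightX_homo_adj0 adj00 xt1_adj0 (leq0n _). Qed.

Lemma adj_xt1_of_J1 x y : x \in J1 adj -> adj x y -> adj xr y.
Proof. by rewrite inE => /andP [_ /forallP sub] /(implyP (sub y)). Qed.

Definition near_xt1 (z : vert n1 n2) :=
  match z with
  | inl c => [exists y, adj c y && adj xr y]
  | inr k => adj xr k
  end.

Section PivotY.
Variables (D : {set vert n1 n2}) (j : 'I_n2.+1).
Hypotheses (Dved : is_ved adj D) (jD : inr j \in D) (j0 : adj ord0 j).

Let xr_j : adj xr j := adj_xt1_of_adj0 adj00 j0.

Lemma J1_sub_nbr_of_far :
  (forall z, z \in D -> z != inr j -> ~~ near_xt1 z) -> [forall x in J1 adj, adj x j].
Proof.
move=> far; apply/forall_inP => x xJ; have [y hxy] := exists_adjX x.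
have [z zD zd] := (is_vedP adj D).1 Dved x y hxy.
have [ez | nz] := eqVneq z (inr j); first by rewrite ez ve_dominatesY_edge in zd.
case/negP: (far z zD nz); case: z {zD nz} zd => [c | k] /=.
  rewrite ve_dominatesXE => cd; apply/existsP; exists y.
  by rewrite (adj_xt1_of_J1 xJ hxy) andbT; case/orP: cd => [/eqP ->|].
by rewrite ve_dominatesY_edge //; apply: adj_xt1_of_J1.
Qed.

Section Undominated.
Variables (c0 : 'I_n1.+1) (w : 'I_n2.+1).
Hypotheses (c0w : adj c0 w)
  (undom : forall z, z \in D :\ inr j :|: [set inl xr] -> ~~ ve_dominates z c0 w).

Lemma not_adj_xt1_undominated : ~~ adj xr w.
Proof.
have /undom : inl xr \in D :\ inr j :|: [set inl xr] by rewrite inE set11 orbT.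
by rewrite ve_dominatesXE; apply: contra => ->; rewrite orbT.
Qed.

Lemma undominated_by_rest z : z \in D -> z != inr j -> ~~ ve_dominates z c0 w.
Proof. by move=> zD nz; apply: undom; rewrite !inE zD nz. Qed.

Lemma adj_undominated_j : adj c0 j.
Proof.
have [z zD zd] := (is_vedP adj D).1 Dved c0 w c0w.
have [ez | nz] := eqVneq z (inr j); first by rewrite ez ve_dominatesY_edge in zd.
by rewrite (negbTE (undominated_by_rest zD nz)) in zd.
Qed.

Variable m : 'I_n1.+1.
Hypotheses (mj : adj m j) (mmax : forall x, adj x j -> rightX adj x <= rightX adj m).

Lemma adj_xt1_or_m x y : adj x y -> adj x j -> adj xr y || adj m y.
Proof.
move=> hxy hxj; case: (boolP (adj xr y)) => //= nxy; apply: (adj_between mj).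
by rewrite ltnW ?(adj_xt1_lt xr_j nxy) // (leq_trans (leq_rightX hxy)) ?mmax.
Qed.

(* Outside N(x_r), what z dominates lies before w (else z would dominate the
   edge c0 w), hence within the reach of c0 and so of m. *)
Lemma near_dominated_xt1_or_m z x y :
  z \in D -> z != inr j -> near_xt1 z -> adj x y -> ve_dominates z x y ->
  adj xr y || adj m y.
Proof.
move=> zD nz + hxy; move: (undominated_by_rest zD nz).
case: (boolP (adj xr y)) => //= nxy; have nxw := not_adj_xt1_undominated.
case: z {zD nz} => [c | k] /=.
  rewrite !ve_dominatesXE negb_or => /andP [_ ncw] /existsP [y' /andP [cy' xy']] cd.
  have cy : adj c y by case/orP: cd => [/eqP ->|].
  have yw : y < w.
    rewrite ltnNge; apply: contra ncw => wy.
    by apply: (adj_convex cy' cy); rewrite wy ltnW ?(adj_xt1_lt xy' nxw).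
  apply: (adj_between mj); rewrite ltnW ?(adj_xt1_lt xr_j nxy) //=.
  rewrite (leq_trans (ltnW yw)) // (leq_trans (leq_rightX c0w)) //.
  exact/mmax/adj_undominated_j.
rewrite !ve_dominatesY_edge // => nc0k xk hxk.
have kj : k < j.
  rewrite ltnNge; apply: contra nc0k => jk; apply: (adj_convex adj_undominated_j c0w).
  by rewrite jk ltnW ?(adj_xt1_lt xk nxw).
have hxj : adj x j.
  by apply: (adj_convex hxk hxy); rewrite (ltnW kj) ltnW ?(adj_xt1_lt xr_j nxy).
by have := adj_xt1_or_m hxy hxj; rewrite (negbTE nxy).
Qed.

End Undominated.

Lemma min_ved_swap_near c0 w m z :
  is_min_ved adj D -> adj c0 w ->
  (forall z, z \in D :\ inr j :|: [set inl xr] -> ~~ ve_dominates z c0 w) ->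
  adj m j -> (forall x, adj x j -> rightX adj x <= rightX adj m) ->
  z \in D -> z != inr j -> near_xt1 z ->
  is_min_ved adj (D :\: [set inr j; z] :|: [set inl xr; inl m]).
Proof.
move=> Dmin c0w undom mj mmax zD nz hz; apply: min_ved_exchange => //.
- by apply/subsetP => u /set2P [-> | ->].
- by rewrite !cards2 (eq_sym (inr j)) nz; case: (_ != _).
have cover x y : adj xr y || adj m y ->
    exists2 w', w' \in [set inl xr; inl m] & ve_dominates w' x y.
  case/orP=> h; [exists (inl xr) | exists (inl m)];
    by rewrite ?set21 ?set22 // ve_dominatesXE h orbT.
move=> x y w' hxy /set2P [-> | ->] hd; apply: cover.
  by rewrite ve_dominatesY_edge in hd; first exact: (adj_xt1_or_m mj mmax hxy hd).
exact: (near_dominated_xt1_or_m c0w undom mj mmax zD nz hz hxy).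
Qed.

End PivotY.

Lemma exists_alpha j :
  adj ord0 j -> [forall x in J1 adj, adj x j] ->
  exists alpha : 'I_n2.+1,
    [/\ alpha <= rightX adj ord0, [forall x in J1 adj, adj x alpha],
        (forall i : 'I_n2.+1, i <= rightX adj ord0 ->
           [forall x in J1 adj, adj x i] -> i <= alpha),
        adj ord0 alpha
      & forall x, adj x j -> adj x alpha].
Proof.
move=> j0 J1j.
have Pj : (j <= rightX adj ord0) && [forall x in J1 adj, adj x j].
  by rewrite leq_rightX.
case: (@arg_maxnP _ j (fun i => (i <= rightX adj ord0) && [forall x in J1 adj, adj x i])
         (fun i : 'I_n2.+1 => (i : nat)) Pj) => alpha /andP [ar' J1a] amax.
have ja : j <= alpha := amax j Pj.
exists alpha; split=> //.
- by move=> i ir' J1i; apply: amax; rewrite ir' J1i.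
- by apply: (adj_between adj00); rewrite leq0n.
move=> x xj; have [x0 | nx0] := boolP (adj x ord0).
  apply: (adj_between x0); rewrite leq0n (leq_trans ar') //.
  exact: rightX_homo_adj0 adj00 x0 (leq0n _).
have [ax | xa] := leqP alpha (rightX adj x); first by apply: (adj_between xj); rewrite ja.
have xJ : x \in J1 adj.
  rewrite inE nx0; apply/forallP => y; apply/implyP => xy; rewrite adj_xt1E.
  rewrite (leq_trans (leq_rightX xy)) // (leq_trans (ltnW xa)) //.
  exact: leq_trans ar' rightX_ord0_le_xt1.
by move/forall_inP: J1a; apply.
Qed.

End LexConvexOrder.

(* The hypothesis [s < n2] only serves, in the source, to name y_{s+1}; the
   dichotomy itself does not use it. *)
Theorem lemma1 (n1 n2 : nat) (adj : 'I_n1.+1 -> 'I_n2.+1 -> bool) :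
  connected_bip adj ->
  lex_convex adj ->
  let r' := rightX adj ord0 in        (* y_{r'} = right(x_1) *)
  let xr := xt1 adj in                (* x_r = right(y_1) *)
  let s := rightX adj xr in           (* y_s = right(x_r) *)
  s < n2 ->                           (* s < n_2 (0-based: y_s is not the last vertex) *)
  (exists D, is_min_ved adj D /\ inl xr \in D)
  \/
  (exists alpha : 'I_n2.+1,
      [/\ alpha <= r',
          [forall x in J1 adj, adj x alpha],
          (forall i : 'I_n2.+1,
              i <= r' -> [forall x in J1 adj, adj x i] -> i <= alpha),
          adj ord0 alpha
        & exists D, is_min_ved adj D /\ inr alpha \in D]).
Proof.
move=> conn lex r' xr s _; rewrite {}/s {}/r' {}/xr.
have [D Dmin] := min_ved_exists adj; have Dved := Dmin.1.
have a00 := adj00 conn lex; have [w wD] := (is_vedP adj D).1 Dved _ _ a00.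
case: w wD => [x' | j] wD dom0.
  have x'0 : adj x' ord0 by move: dom0; rewrite ve_dominatesXE => /orP [/eqP ->|].
  left; exists (D :\ inl x' :|: [set inl (xt1 adj)]).
  split; last by rewrite inE set11 orbT.
  apply: min_ved_swap1 => // x y xy; rewrite !ve_dominatesXE => x'd; apply/orP; right.
  by apply: (adj_xt1_of_adj0 conn lex x'0); case/orP: x'd => [/eqP ->|].
have j0 : adj ord0 j by rewrite ve_dominatesY_edge in dom0.
set D1 := D :\ inr j :|: [set inl (xt1 adj)].
have [D1ved | [c0 [w [c0w undom]]]] := ved_or_undominated adj D1.
  left; exists D1; split; last by rewrite inE set11 orbT.
  by apply: min_ved_le Dmin D1ved _; rewrite card_setDU ?sub1set ?cards1.
have [m mj mmax] := exists_max_rightX_nbr (adj_undominated_j Dved c0w undom).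
case: (boolP [exists z in D, (z != inr j) && near_xt1 adj z]).
  case/exists_inP => z zD /andP [nz hz]; left; eexists; split.
    exact (min_ved_swap_near conn lex Dved wD j0 Dmin c0w undom mj mmax zD nz hz).
  by rewrite inE set21 orbT.
rewrite negb_exists_in => /forall_inP far.
have J1j : [forall x in J1 adj, adj x j].
  by apply: (J1_sub_nbr_of_far conn Dved) => z zD nz; move: (far z zD); rewrite nz.
have [alpha [ar' J1a amax a0 sub]] := exists_alpha conn lex j0 J1j.
right; exists alpha; split=> //; exists (D :\ inr j :|: [set inr alpha]).
split; last by rewrite inE set11 orbT.
by apply: min_ved_swap1 => // x y xy; rewrite !ve_dominatesY_edge //; apply: sub.
Qed.
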